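(* Let $0\to V\to\widehat A\xrightarrow{j}A\to0$ be an abelian extension of a Com-PreLie algebra $A$ by a representation $(V,\mu,l,r)$ inducing that representation, let $s$ be a linear section of $j$, and let $(\phi,\psi)$ be the 2-cocycle $\phi(x,y)=s(x)\ast_{\widehat A}s(y)-s(x\ast y)$, $\psi(x,y)=s(x)\bullet_{\widehat A}s(y)-s(x\bullet y)$. A pair $(\beta,\alpha)\in\mathrm{Aut}(V)\times\mathrm{Aut}(A)$ is inducible if and only if $(\beta,\alpha)\in\mathcal C$ and the 2-cocycles $(\phi,\psi)^{(\beta,\alpha)}$ and $(\phi,\psi)$ are cohomologous.
   Context: All vector spaces are over a field of characteristic $0$. A Com-PreLie algebra is a triple $(A,\ast,\bullet)$ where $A$ is a vector space, $\ast$ is a commutative associative bilinear product on $A$, and $\bullet$ is a bilinear product on $A$ satisfying the left pre-Lie identity $(x\bullet y)\bullet z-x\bullet(y\bullet z)=(y\bullet x)\bullet z-y\bullet(x\bullet z)$ and the compatibility $x\bullet(y\ast z)=(x\bullet y)\ast z+y\ast(x\bullet z)$ for all $x,y,z\in A$. A homomorphism of Com-PreLie algebras is a linear map preserving both products. A representation of $A$ is a quadruple $(V,\mu,l,r)$ with $V$ a vector space and $\mu,l,r:A\to\mathrm{End}(V)$ linear maps satisfying, for all $x,y\in A$: $\mu(x\ast y)=\mu(x)\mu(y)$; $l(x\bullet y)-l(x)l(y)=l(y\bullet x)-l(y)l(x)$; $r(y)l(x)-l(x)r(y)=r(y)r(x)-r(x\bullet y)$; $l(x)\mu(y)=\mu(x\bullet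 y)+\mu(y)l(x)$; $r(x\ast y)=\mu(y)r(x)+\mu(x)r(y)$. An abelian extension of $A$ by $V$ is a Com-PreLie algebra $(\widehat A,\ast_{\widehat A},\bullet_{\widehat A})$ with a short exact sequence $0\to V\xrightarrow{i}\widehat A\xrightarrow{j}A\to0$ of Com-PreLie algebra homomorphisms, $V$ carrying the zero products; $V$ is identified with $i(V)=\ker j$. It induces the given representation if for any linear section $s$ of $j$ ($j\circ s=\mathrm{id}_A$): $\mu(x)u=s(x)\ast_{\widehat A}u$, $l(x)u=s(x)\bullet_{\widehat A}u$, $r(x)u=u\bullet_{\widehat A}s(x)$. Two pairs $(\phi,\psi),(\phi',\psi')$ of bilinear maps $A\times A\to V$ are cohomologous if there is a linear $f:A\to V$ with $\phi(x,y)-\phi'(x,y)=\mu(x)f(y)-f(x\ast y)+\mu(y)f(x)$ and $\psi(x,y)-\psi'(x,y)=l(x)f(y)-f(x\bullet y)+r(y)f(x)$ for all $x,y\in A$. $\mathrm{Aut}(A)$ is the group of Com-PreLie algebra automorphisms of $A$; $\mathrm{Aut}(V)$ is the group of linear automorphisms of $V$; $\mathrm{Aut}_V(\widehat A)$ is the group of Com-PreLie algebra automorphisms $\gamma$ of $\widehat A$ with $\gamma(V)=V$. For $\gamma\in\mathrm{Aut}_V(\widehat A)$ put $\overline\gamma=j\gamma s\in\mathrm{Aut}(A)$ and $\tau(\gamma)=(\gamma|_V,\overline\gamma)$. A pair $(\beta,\alpha)\in\mathrm{Aut}(V)\times\mathrm{Aut}(A)$ is inducible if $(\beta,\alpha)=\tau(\gamma)$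 for some $\gamma\in\mathrm{Aut}_V(\widehat A)$. $\mathcal C$ is the set of pairs $(\beta,\alpha)\in\mathrm{Aut}(V)\times\mathrm{Aut}(A)$ with $\beta(\mu(x)u)=\mu(\alpha(x))\beta(u)$, $\beta(l(x)u)=l(\alpha(x))\beta(u)$, $\beta(r(x)u)=r(\alpha(x))\beta(u)$ for all $x\in A,u\in V$. For such a pair, $(\phi,\psi)^{(\beta,\alpha)}$ is the pair $(x,y)\mapsto\big(\beta\phi(\alpha^{-1}x,\alpha^{-1}y),\ \beta\psi(\alpha^{-1}x,\alpha^{-1}y)\big)$. *)

From HB Require Import structures.
From mathcomp Require Import all_boot all_order all_algebra.
Set Implicit Arguments. Unset Strict Implicit. Unset Printing Implicit Defensive.
Import GRing.Theory.
Local Open Scope ring_scope.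

Section ComPreLie.
Variable K : fieldType.

Definition islinear (U W : lmodType K) (f : U -> W) : Prop :=
  forall (a : K) (x y : U), f (a *: x + y) = a *: f x + f y.

Definition isbilinear (U W : lmodType K) (f : U -> U -> W) : Prop :=
  (forall x, islinear (f x)) /\ (forall y, islinear (fun x => f x y)).

(* (A, mul, pl) is a Com-PreLie algebra: mul = *, pl = bullet *)
Definition is_ComPreLie (A : lmodType K) (mul pl : A -> A -> A) : Prop :=
  isbilinear mul /\ isbilinear pl /\
  (forall x y, mul x y = mul y x) /\
  (forall x y z, mul (mul x y) z = mul x (mul y z)) /\
  (forall x y z, pl (pl x y) z - pl x (pl y z) = pl (pl y x) z - pl y (pl x z)) /\
  (forall x y z, pl x (mul y z) = mul (pl x y) z + mul y (pl x z)).

Definition is_CPL_hom (A B : lmodType K) (mulA plA : A -> A -> A)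
  (mulB plB : B -> B -> B) (f : A -> B) : Prop :=
  [/\ islinear f, (forall x y, f (mulA x y) = mulB (f x) (f y))
    & (forall x y, f (plA x y) = plB (f x) (f y))].

Definition is_CPL_aut (A : lmodType K) (mul pl : A -> A -> A) (f : A -> A) : Prop :=
  is_CPL_hom mul pl mul pl f /\ bijective f.

Definition is_lin_aut (V : lmodType K) (f : V -> V) : Prop :=
  islinear f /\ bijective f.

Definition is_representation (A V : lmodType K) (mul pl : A -> A -> A)
  (mu l r : A -> V -> V) : Prop :=
  (forall x, islinear (mu x)) /\ (forall x, islinear (l x)) /\ (forall x, islinear (r x)) /\
  (forall a x y u, mu (a *: x + y) u = a *: mu x u + mu y u) /\
  (forall a x y u, l (a *: x + y) u = a *: l x u + l y u) /\
  (forall a x y u, r (a *: x + y) u = a *: r x u + r y u) /\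
  (forall x y u, mu (mul x y) u = mu x (mu y u)) /\
  (forall x y u, l (pl x y) u - l x (l y u) = l (pl y x) u - l y (l x u)) /\
  (forall x y u, r y (l x u) - l x (r y u) = r y (r x u) - r (pl x y) u) /\
  (forall x y u, l x (mu y u) = mu (pl x y) u + mu y (l x u)) /\
  (forall x y u, r (mul x y) u = mu y (r x u) + mu x (r y u)).

Definition is_section (Ah A : lmodType K) (j : Ah -> A) (s : A -> Ah) : Prop :=
  islinear s /\ (forall x, j (s x) = x).

Definition is_abelian_extension (A V Ah : lmodType K) (mul pl : A -> A -> A)
  (mulh plh : Ah -> Ah -> Ah) (i : V -> Ah) (j : Ah -> A) : Prop :=
  is_ComPreLie mulh plh /\
  is_CPL_hom (fun _ _ => 0) (fun _ _ => 0) mulh plh i /\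
  is_CPL_hom mulh plh mul pl j /\
  injective i /\
  (forall x, exists a, j a = x) /\
  (forall a, j a = 0 <-> exists u, a = i u).

(* the extension induces the representation (mu, l, r), V identified with i(V) *)
Definition induces_rep (A V Ah : lmodType K) (mulh plh : Ah -> Ah -> Ah)
  (i : V -> Ah) (j : Ah -> A) (mu l r : A -> V -> V) : Prop :=
  forall s, is_section j s ->
    forall x u, [/\ i (mu x u) = mulh (s x) (i u),
                    i (l x u) = plh (s x) (i u)
                  & i (r x u) = plh (i u) (s x)].

Definition cohomologous (A V : lmodType K) (mul pl : A -> A -> A)
  (mu l r : A -> V -> V) (phi psi phi' psi' : A -> A -> V) : Prop :=
  exists f : A -> V, islinear f /\
    forall x y,
      phi x y - phi' x y = mu x (f y) - f (mul x y) + mu y (f x) /\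
      psi x y - psi' x y = l x (f y) - f (pl x y) + r y (f x).

Definition in_C (A V : lmodType K) (mu l r : A -> V -> V) (beta : V -> V)
  (alpha : A -> A) : Prop :=
  forall x u, [/\ beta (mu x u) = mu (alpha x) (beta u),
                  beta (l x u) = l (alpha x) (beta u)
                & beta (r x u) = r (alpha x) (beta u)].

(* (phi,psi)^(beta,alpha), given the inverse alphainv of alpha *)
Definition twist (A V : lmodType K) (beta : V -> V) (alphainv : A -> A)
  (phi : A -> A -> V) : A -> A -> V :=
  fun x y => beta (phi (alphainv x) (alphainv y)).

(* (beta, alpha) is inducible: equals tau(gamma) for some gamma in Aut_V(Ah);
   gamma|_V read through i, and alphabar = j gamma s *)
Definition inducible (A V Ah : lmodType K) (mulh plh : Ah -> Ah -> Ah)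
  (i : V -> Ah) (j : Ah -> A) (s : A -> Ah) (beta : V -> V) (alpha : A -> A) : Prop :=
  exists gamma : Ah -> Ah,
    [/\ is_CPL_aut mulh plh gamma,
        (forall a, (exists u, a = i u) <-> (exists u, gamma a = i u)),
        (forall u, gamma (i u) = i (beta u))
      & (forall x, j (gamma (s x)) = alpha x)].

End ComPreLie.

(* An abelian extension splits linearly as [s x + i u], and in these
   coordinates its products are [s (x * y) + i (phi x y + mu x w + mu y u)]
   and [s (x . y) + i (psi x y + l x w + r y u)].  An automorphism preserving
   [V] with restriction [beta] and induced map [alpha] is then necessarily
   [s x + i u |-> s (alpha x) + i (g x + beta u)] for a linear [g : A -> V].
   Comparing both sides of [gamma (a * b) = gamma a * gamma b] on [V] and on
   [s A] shows that such a map is a morphism exactly when [(beta, alpha)] is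
   compatible with [mu], [l], [r] and [g] transports [(phi, psi)] to its
   [(beta, alpha)]-twist up to a coboundary; conversely any such [g] defines
   an automorphism by this formula. *)

From HB Require Import structures.
From mathcomp Require Import all_boot all_order all_algebra.
Set Implicit Arguments. Unset Strict Implicit. Unset Printing Implicit Defensive.
Import GRing.Theory.
Local Open Scope ring_scope.

Section LinearMaps.
Variable K : fieldType.
Implicit Types U W X : lmodType K.

Lemma islinear0 U W (f : U -> W) : islinear f -> f 0 = 0.
Proof.
move=> f_lin; have := f_lin 1 0 0; rewrite !scale1r addr0 => f00.
by apply: (@addrI _ (f 0)); rewrite addr0 -f00.
Qed.

Lemma islinearD U W (f : U -> W) : islinear f -> forall x y, f (x + y) = f x + f y.
Proof. by move=> f_lin x y; have := f_lin 1 x y; rewrite !scale1r. Qed.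

Lemma islinearB U W (f : U -> W) : islinear f -> forall x y, f (x - y) = f x - f y.
Proof.
move=> f_lin x y; have := f_lin (-1) y 0.
by rewrite (islinear0 f_lin) !addr0 !scaleN1r => fN; rewrite (islinearD f_lin) fN.
Qed.

Lemma islinear_comp U W X (f : U -> W) (g : W -> X) :
  islinear f -> islinear g -> islinear (fun x => g (f x)).
Proof. by move=> f_lin g_lin a x y; rewrite f_lin g_lin. Qed.

Lemma islinear_can U W (f : U -> W) (g : W -> U) :
  islinear f -> cancel f g -> cancel g f -> islinear g.
Proof. by move=> f_lin fK gK a x y; apply: (can_inj fK); rewrite f_lin !gK. Qed.

Lemma isbilinearDl U W (f : U -> U -> W) :
  isbilinear f -> forall x y z, f (x + y) z = f x z + f y z.
Proof. by case=> _ fl x y z; rewrite (islinearD (fl z)). Qed.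

Lemma isbilinearDr U W (f : U -> U -> W) :
  isbilinear f -> forall x y z, f z (x + y) = f z x + f z y.
Proof. by case=> fr _ x y z; rewrite (islinearD (fr z)). Qed.

End LinearMaps.

Lemma can2_morph2 (T : Type) (op : T -> T -> T) (f g : T -> T) :
  cancel f g -> cancel g f -> {morph f : x y / op x y} -> {morph g : x y / op x y}.
Proof. by move=> fK gK fM x y; rewrite -{1}(gK x) -{1}(gK y) -fM fK. Qed.

(* The condition of [cohomologous] for the [(beta, alpha)]-twist of [c],
   evaluated at [(alpha x, alpha y)] and written for [g = f \o alpha], so that
   the inverse of [alpha] does not occur. *)
Definition twist_coboundary (K : fieldType) (A V : lmodType K) (m : A -> A -> A)
    (c : A -> A -> V) (L R : A -> V -> V) (beta : V -> V) (alpha : A -> A)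
    (g : A -> V) : Prop :=
  forall x y,
    beta (c x y) - c (alpha x) (alpha y) = L (alpha x) (g y) - g (m x y) + R (alpha y) (g x).

Lemma twist_coboundaryE (K : fieldType) (A V : lmodType K) (m : A -> A -> A)
    (c : A -> A -> V) (L R : A -> V -> V) (beta : V -> V) (alpha alphainv : A -> A)
    (g : A -> V) :
  cancel alpha alphainv -> cancel alphainv alpha -> {morph alpha : x y / m x y} ->
  twist_coboundary m c L R beta alpha g <->
  forall x y, twist beta alphainv c x y - c x y =
    L x (g (alphainv y)) - g (alphainv (m x y)) + R y (g (alphainv x)).
Proof.
move=> alphaK alphainvK alphaM; rewrite /twist; split=> cob x y.
- have := cob (alphainv x) (alphainv y).
  by rewrite !alphainvK -(can2_morph2 alphaK alphainvK alphaM).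
- by have := cob (alpha x) (alpha y); rewrite !alphaK -alphaM alphaK.
Qed.

Lemma cohomologous_twist (K : fieldType) (A V : lmodType K) (mul pl : A -> A -> A)
    (mu l r : A -> V -> V) (phi psi : A -> A -> V) (beta : V -> V)
    (alpha alphainv : A -> A) :
  cancel alpha alphainv -> cancel alphainv alpha -> islinear alpha ->
  {morph alpha : x y / mul x y} -> {morph alpha : x y / pl x y} ->
  cohomologous mul pl mu l r (twist beta alphainv phi) (twist beta alphainv psi) phi psi <->
  exists2 g, islinear g &
    twist_coboundary mul phi mu mu beta alpha g /\ twist_coboundary pl psi l r beta alpha g.
Proof.
move=> alphaK alphainvK alpha_lin alpha_mul alpha_pl; split.
  case=> f [f_lin cob]; exists (fun x => f (alpha x)); first exact: islinear_comp.
  split.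
    by apply/(twist_coboundaryE _ _ _ _ _ alphaK alphainvK alpha_mul) => x y /=;
      rewrite !alphainvK; case: (cob x y).
  by apply/(twist_coboundaryE _ _ _ _ _ alphaK alphainvK alpha_pl) => x y /=;
    rewrite !alphainvK; case: (cob x y).
case=> g g_lin [cob_mul cob_pl]; exists (fun x => g (alphainv x)).
split; first exact: islinear_comp (islinear_can alpha_lin alphaK alphainvK) g_lin.
move: cob_mul cob_pl => /(twist_coboundaryE _ _ _ _ _ alphaK alphainvK alpha_mul) cob_mul
  /(twist_coboundaryE _ _ _ _ _ alphaK alphainvK alpha_pl) cob_pl.
by move=> x y; split; [exact: cob_mul | exact: cob_pl].
Qed.

Section SplitExtension.
Variables (K : fieldType) (A V Ah : lmodType K).
Variables (i : V -> Ah) (j : Ah -> A) (s : A -> Ah).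
Hypotheses (i_lin : islinear i) (j_lin : islinear j) (s_lin : islinear s).
Hypotheses (i_inj : injective i) (sK : cancel s j).
Hypothesis ker_j : forall a, j a = 0 <-> exists u, a = i u.

Lemma j_s_add_i x u : j (s x + i u) = x.
Proof.
have j_i : j (i u) = 0 by apply/ker_j; exists u.
by rewrite (islinearD j_lin) sK j_i addr0.
Qed.

Lemma s_add_i_inj x u y w : s x + i u = s y + i w -> x = y /\ u = w.
Proof.
move=> eq_xu_yw; have eq_xy : x = y by rewrite -(j_s_add_i x u) eq_xu_yw j_s_add_i.
by split=> //; apply: i_inj; apply: (@addrI _ (s x)); rewrite eq_xu_yw eq_xy.
Qed.

Lemma s_add_i_in_image x u : (exists w, s x + i u = i w) <-> x = 0.
Proof.
split=> [[w eq_w]|->].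
  by rewrite -(j_s_add_i x u) eq_w -[i w]add0r -(islinear0 s_lin) j_s_add_i.
by exists u; rewrite (islinear0 s_lin) add0r.
Qed.

Lemma ext_decomposition a : exists u, a == s (j a) + i u.
Proof.
have [u eq_u] : exists u, a - s (j a) = i u.
  by apply/ker_j; rewrite (islinearB j_lin) sK subrr.
by exists u; rewrite -eq_u addrC subrK.
Qed.

Definition coord a : V := xchoose (ext_decomposition a).

Lemma coordK a : s (j a) + i (coord a) = a.
Proof. exact/esym/eqP/(xchooseP (ext_decomposition a)). Qed.

Lemma coord_s_add_i x u : coord (s x + i u) = u.
Proof. by have /s_add_i_inj[] := coordK (s x + i u). Qed.

Lemma s_add_i_onto a : exists x u, a = s x + i u.
Proof. by exists (j a), (coord a); rewrite coordK. Qed.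

Lemma scale_s_add_i k x u y w :
  k *: (s x + i u) + (s y + i w) = s (k *: x + y) + i (k *: u + w).
Proof. by rewrite s_lin i_lin scalerDr addrACA. Qed.

Lemma coord_linear : islinear coord.
Proof.
move=> k a b; have [x [u ->]] := s_add_i_onto a; have [y [w ->]] := s_add_i_onto b.
by rewrite scale_s_add_i !coord_s_add_i.
Qed.

Section Lift.
Variables (beta : V -> V) (alpha : A -> A) (g : A -> V).

Definition ext_lift a := s (alpha (j a)) + i (g (j a) + beta (coord a)).

Lemma ext_lift_s_add_i x u : ext_lift (s x + i u) = s (alpha x) + i (g x + beta u).
Proof. by rewrite /ext_lift j_s_add_i coord_s_add_i. Qed.

Hypotheses (beta_lin : islinear beta) (alpha_lin : islinear alpha) (g_lin : islinear g).

Lemma ext_lift_linear : islinear ext_lift.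
Proof.
move=> k a b; have [x [u ->]] := s_add_i_onto a; have [y [w ->]] := s_add_i_onto b.
rewrite scale_s_add_i !ext_lift_s_add_i scale_s_add_i alpha_lin g_lin beta_lin.
by rewrite scalerDr addrACA.
Qed.

Lemma ext_lift_i u : ext_lift (i u) = i (beta u).
Proof.
have := ext_lift_s_add_i 0 u.
by rewrite (islinear0 alpha_lin) (islinear0 g_lin) !(islinear0 s_lin) !add0r.
Qed.

Lemma j_ext_lift_s x : j (ext_lift (s x)) = alpha x.
Proof. by rewrite -[s x]addr0 -(islinear0 i_lin) ext_lift_s_add_i j_s_add_i. Qed.

Lemma ext_lift_ker : injective alpha ->
  forall a, (exists u, a = i u) <-> (exists u, ext_lift a = i u).
Proof.
move=> alpha_inj a; have [x [u ->]] := s_add_i_onto a; rewrite ext_lift_s_add_i.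
split=> [/s_add_i_in_image->|/s_add_i_in_image alpha_x0]; apply/s_add_i_in_image.
  exact: islinear0 alpha_lin.
by apply: alpha_inj; rewrite alpha_x0 (islinear0 alpha_lin).
Qed.

Lemma ext_lift_bij : bijective alpha -> bijective beta -> bijective ext_lift.
Proof.
case=> alphainv alphaK alphainvK [betainv betaK betainvK].
exists (fun a => s (alphainv (j a)) + i (betainv (coord a - g (alphainv (j a))))).
  move=> a; have [x [u ->]] := s_add_i_onto a.
  by rewrite ext_lift_s_add_i j_s_add_i coord_s_add_i alphaK addrAC subrr add0r betaK.
move=> a; have [x [u ->]] := s_add_i_onto a.
rewrite j_s_add_i coord_s_add_i ext_lift_s_add_i alphainvK betainvK.
by rewrite (addrC (g _)) subrK.
Qed.

End Lift.

Section Automorphism.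
Variables (gam : Ah -> Ah) (alpha : A -> A).
Hypotheses (gam_lin : islinear gam) (j_gam_s : forall x, j (gam (s x)) = alpha x).

Definition aut_shift x := coord (gam (s x)).

Lemma gam_s_shift x : gam (s x) = s (alpha x) + i (aut_shift x).
Proof. by rewrite /aut_shift -j_gam_s coordK. Qed.

Lemma aut_shift_linear : islinear aut_shift.
Proof. exact: islinear_comp (islinear_comp s_lin gam_lin) coord_linear. Qed.

End Automorphism.

Section Product.
Variables (mh : Ah -> Ah -> Ah) (m : A -> A -> A) (c : A -> A -> V) (L R : A -> V -> V).
Hypotheses (mh_bil : isbilinear mh).
Hypotheses (mh_s_s : forall x y, mh (s x) (s y) = s (m x y) + i (c x y))
  (mh_s_i : forall x u, mh (s x) (i u) = i (L x u))
  (mh_i_s : forall x u, mh (i u) (s x) = i (R x u))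
  (mh_i_i : forall u w, mh (i u) (i w) = 0).

Lemma mh_s_add_i x u y w :
  mh (s x + i u) (s y + i w) = s (m x y) + i (c x y + L x w + R y u).
Proof.
rewrite (isbilinearDl mh_bil) !(isbilinearDr mh_bil) mh_s_s mh_s_i mh_i_s mh_i_i addr0.
by rewrite !(islinearD i_lin) !addrA.
Qed.

Section InducedPair.
Variables (gam : Ah -> Ah) (beta : V -> V) (alpha : A -> A).
Hypotheses (gam_lin : islinear gam) (gam_i : forall u, gam (i u) = i (beta u))
  (j_gam_s : forall x, j (gam (s x)) = alpha x)
  (gamM : {morph gam : a b / mh a b}) (alphaM : {morph alpha : x y / m x y}).

Lemma aut_compat_left x u : beta (L x u) = L (alpha x) (beta u).
Proof.
apply: i_inj; rewrite -gam_i -mh_s_i gamM gam_i (gam_s_shift j_gam_s).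
by rewrite (isbilinearDl mh_bil) mh_s_i mh_i_i addr0.
Qed.

Lemma aut_compat_right x u : beta (R x u) = R (alpha x) (beta u).
Proof.
apply: i_inj; rewrite -gam_i -mh_i_s gamM gam_i (gam_s_shift j_gam_s).
by rewrite (isbilinearDr mh_bil) mh_i_s mh_i_i addr0.
Qed.

Lemma aut_twist_coboundary : twist_coboundary m c L R beta alpha (aut_shift gam).
Proof.
move=> x y; apply: i_inj.
have i_c : i (c x y) = mh (s x) (s y) - s (m x y) by rewrite mh_s_s addrAC subrr add0r.
rewrite (islinearB i_lin) -gam_i i_c (islinearB gam_lin) gamM !(gam_s_shift j_gam_s).
rewrite mh_s_add_i alphaM.
rewrite opprD addrACA subrr add0r -!(islinearB i_lin); congr (i _).
by rewrite addrAC -(addrA (c _ _)) (addrC (c _ _)) addrK addrAC.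
Qed.

End InducedPair.

Variables (beta : V -> V) (alpha : A -> A) (g : A -> V).
Hypotheses (L_lin : forall x, islinear (L x)) (R_lin : forall x, islinear (R x)).
Hypotheses (beta_lin : islinear beta) (alphaM : {morph alpha : x y / m x y}).
Hypotheses (compat_left : forall x u, beta (L x u) = L (alpha x) (beta u))
  (compat_right : forall x u, beta (R x u) = R (alpha x) (beta u))
  (cob : twist_coboundary m c L R beta alpha g).

Lemma ext_lift_morph : {morph ext_lift beta alpha g : a b / mh a b}.
Proof.
move=> a b; have [x [u ->]] := s_add_i_onto a; have [y [w ->]] := s_add_i_onto b.
rewrite mh_s_add_i !ext_lift_s_add_i mh_s_add_i alphaM; congr (_ + i _).
rewrite !(islinearD beta_lin) compat_left compat_right.
rewrite (islinearD (L_lin _)) (islinearD (R_lin _)).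
have -> : beta (c x y) =
    c (alpha x) (alpha y) + (L (alpha x) (g y) - g (m x y) + R (alpha y) (g x)).
  by rewrite -cob addrC subrK.
rewrite -!addrA (addrCA (g _)); congr (_ + _).
by rewrite addrCA addNKr; congr (_ + _); exact: addrCA.
Qed.

End Product.
End SplitExtension.

Section ComPreLieExtension.
Variables (K : fieldType) (A V Ah : lmodType K).
Variables (mul pl : A -> A -> A) (mulh plh : Ah -> Ah -> Ah) (mu l r : A -> V -> V).
Variables (i : V -> Ah) (j : Ah -> A) (s : A -> Ah) (phi psi : A -> A -> V).
Hypotheses (hrep : is_representation mul pl mu l r)
  (hext : is_abelian_extension mul pl mulh plh i j)
  (hind : induces_rep mulh plh i j mu l r) (hs : is_section j s)
  (hphi : forall x y, i (phi x y) = mulh (s x) (s y) - s (mul x y))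
  (hpsi : forall x y, i (psi x y) = plh (s x) (s y) - s (pl x y)).

Let s_lin : islinear s. Proof. by case: hs. Qed.
Let sK : cancel s j. Proof. by case: hs. Qed.
Let mulh_bil : isbilinear mulh. Proof. by case: hext => -[]. Qed.
Let plh_bil : isbilinear plh. Proof. by case: hext => -[_ []]. Qed.
Let i_lin : islinear i. Proof. by case: hext => _ [[]]. Qed.
Let j_lin : islinear j. Proof. by case: hext => _ [_ [[]]]. Qed.
Let i_inj : injective i. Proof. by case: hext => _ [_ [_ []]]. Qed.
Let ker_j a : j a = 0 <-> exists u, a = i u.
Proof. by case: hext => _ [_ [_ [_ []]]]. Qed.
Let mu_lin x : islinear (mu x). Proof. by case: hrep. Qed.
Let l_lin x : islinear (l x). Proof. by case: hrep => _ []. Qed.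
Let r_lin x : islinear (r x). Proof. by case: hrep => _ [_ []]. Qed.

Lemma mulh_s_s x y : mulh (s x) (s y) = s (mul x y) + i (phi x y).
Proof. by rewrite hphi addrC subrK. Qed.

Lemma plh_s_s x y : plh (s x) (s y) = s (pl x y) + i (psi x y).
Proof. by rewrite hpsi addrC subrK. Qed.

Lemma mulh_s_i x u : mulh (s x) (i u) = i (mu x u).
Proof. by case: (hind hs x u). Qed.

Lemma mulh_i_s x u : mulh (i u) (s x) = i (mu x u).
Proof. by case: hext => -[_ [_ [mulhC _]]] _; rewrite mulhC mulh_s_i. Qed.

Lemma plh_s_i x u : plh (s x) (i u) = i (l x u).
Proof. by case: (hind hs x u). Qed.

Lemma plh_i_s x u : plh (i u) (s x) = i (r x u).
Proof. by case: (hind hs x u). Qed.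

Lemma mulh_i_i u w : mulh (i u) (i w) = 0.
Proof. by case: hext => _ [[_ i_mul _] _]; rewrite -i_mul (islinear0 i_lin). Qed.

Lemma plh_i_i u w : plh (i u) (i w) = 0.
Proof. by case: hext => _ [[_ _ i_pl] _]; rewrite -i_pl (islinear0 i_lin). Qed.

Lemma inducible_in_C_coboundary beta alpha :
  {morph alpha : x y / mul x y} -> {morph alpha : x y / pl x y} ->
  inducible mulh plh i j s beta alpha ->
  in_C mu l r beta alpha /\
  exists2 g, islinear g &
    twist_coboundary mul phi mu mu beta alpha g /\ twist_coboundary pl psi l r beta alpha g.
Proof.
move=> alpha_mul alpha_pl [gam [[[gam_lin gam_mul gam_pl] _] _ gam_i j_gam_s]].
split.
  move=> x u; split.
  - exact: (aut_compat_left j_lin i_inj sK ker_j mulh_bil mulh_s_i mulh_i_i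
              gam_i j_gam_s gam_mul x u).
  - exact: (aut_compat_left j_lin i_inj sK ker_j plh_bil plh_s_i plh_i_i
              gam_i j_gam_s gam_pl x u).
  - exact: (aut_compat_right j_lin i_inj sK ker_j plh_bil plh_i_s plh_i_i
              gam_i j_gam_s gam_pl x u).
exists (aut_shift j_lin sK ker_j gam); first exact: aut_shift_linear.
split.
  exact: (aut_twist_coboundary i_lin j_lin i_inj sK ker_j mulh_bil mulh_s_s mulh_s_i mulh_i_s
            mulh_i_i gam_lin gam_i j_gam_s gam_mul alpha_mul).
exact: (aut_twist_coboundary i_lin j_lin i_inj sK ker_j plh_bil plh_s_s plh_s_i plh_i_s
          plh_i_i gam_lin gam_i j_gam_s gam_pl alpha_pl).
Qed.

Lemma in_C_coboundary_inducible beta alpha g :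
  is_lin_aut beta -> is_CPL_aut mul pl alpha -> in_C mu l r beta alpha -> islinear g ->
  twist_coboundary mul phi mu mu beta alpha g -> twist_coboundary pl psi l r beta alpha g ->
  inducible mulh plh i j s beta alpha.
Proof.
move=> [beta_lin beta_bij] [[alpha_lin alpha_mul alpha_pl] alpha_bij] compat g_lin.
move=> cob_mul cob_pl.
have compat_mu x u : beta (mu x u) = mu (alpha x) (beta u) by case: (compat x u).
have compat_l x u : beta (l x u) = l (alpha x) (beta u) by case: (compat x u).
have compat_r x u : beta (r x u) = r (alpha x) (beta u) by case: (compat x u).
exists (ext_lift j_lin sK ker_j beta alpha g); split.
- split; last exact: ext_lift_bij.
  split; first exact: ext_lift_linear.
    exact: (ext_lift_morph i_lin j_lin i_inj sK ker_j mulh_bil mulh_s_s mulh_s_i mulh_i_s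
              mulh_i_i mu_lin mu_lin beta_lin alpha_mul compat_mu compat_mu cob_mul).
  exact: (ext_lift_morph i_lin j_lin i_inj sK ker_j plh_bil plh_s_s plh_s_i plh_i_s
            plh_i_i l_lin r_lin beta_lin alpha_pl compat_l compat_r cob_pl).
- exact: (ext_lift_ker j_lin s_lin i_inj sK ker_j beta g alpha_lin (bij_inj alpha_bij)).
- exact: ext_lift_i.
- exact: j_ext_lift_s.
Qed.

End ComPreLieExtension.

Theorem theorem4p2 (K : fieldType) (charK0 : [pchar K] =i pred0)
  (A V Ah : lmodType K)
  (mul pl : A -> A -> A) (mulh plh : Ah -> Ah -> Ah)
  (mu l r : A -> V -> V) (i : V -> Ah) (j : Ah -> A) (s : A -> Ah)
  (phi psi : A -> A -> V)
  (hA : is_ComPreLie mul pl)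
  (hrep : is_representation mul pl mu l r)
  (hext : is_abelian_extension mul pl mulh plh i j)
  (hind : induces_rep mulh plh i j mu l r)
  (hs : is_section j s)
  (hphi : forall x y, i (phi x y) = mulh (s x) (s y) - s (mul x y))
  (hpsi : forall x y, i (psi x y) = plh (s x) (s y) - s (pl x y))
  (beta : V -> V) (alpha alphainv : A -> A)
  (hbeta : is_lin_aut beta) (halpha : is_CPL_aut mul pl alpha)
  (halinv1 : cancel alpha alphainv) (halinv2 : cancel alphainv alpha) :
  inducible mulh plh i j s beta alpha <->
  (in_C mu l r beta alpha /\
   cohomologous mul pl mu l r (twist beta alphainv phi) (twist beta alphainv psi) phi psi).
Proof.
have [[alpha_lin alpha_mul alpha_pl] _] := halpha.
have cohomE :=
  cohomologous_twist mu l r phi psi beta halinv1 halinv2 alpha_lin alpha_mul alpha_pl.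
split=> [|[compat /cohomE[g g_lin [cob_mul cob_pl]]]].
  by case/(inducible_in_C_coboundary hext hind hs hphi hpsi alpha_mul alpha_pl) => compat /cohomE.
exact: (in_C_coboundary_inducible hrep hext hind hs hphi hpsi hbeta halpha compat g_lin
          cob_mul cob_pl).
Qed.
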